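(* With the areas $A(j,r)$ constructed below, for every $\langle j,r\rangle\in\Pi$ we have $A(j,r)\subseteq B(j,7\cdot 5^r)$.
   Context: $(V,d)$ is a metric space of diameter $W$, $F\subseteq V$ a finite set of facilities with opening costs $f_j>0$, $f_{\min}=\min_j f_j$, $B(x,\rho)=\{y\in V:d(x,y)\le\rho\}$. Let $\rho_{\min}=\lfloor\log_5 f_{\min}\rfloor$, $\rho_{\max}=\lceil\log_5 W\rceil$. For each integer $r\in[\rho_{\min},\rho_{\max}]$, let $J'_r=\{j\in F:f_j\le 5^r\}$ and let $J_r$ be a maximal subset of $J'_r$ such that any two facilities of $J_r$ are at distance greater than $5^{r+1}$. $\Pi=\{\langle j,r\rangle:\rho_{\min}\le r\le\rho_{\max},\ j\in J_r\}$. The tree $\mathcal{T}$ on $\Pi$ has as root the unique pair with $r=\rho_{\max}$, and for $r<\rho_{\max}$, $\mathrm{parent}(j,r)=\langle j',r+1\rangle$ where $j'$ is a facility of $J_{r+1}$ closest to $j$ (ties arbitrary). Areas: initialize $A(j,r)=\emptyset$ for all $\langle j,r\rangle\in\Pi$; for each point $p\in V$ lying in some ball $B(j,7\cdot 5^r)$ with $\langle j,r\rangle\in\Pi$, let $r^*$ be the minimum $r$ for which there is a pair $\langle j,r^*\rangle\in\Pi$ with $p\in B(j,7\cdot5^{r^*})$, let $\langle j^*,r^*\rangle$ be such a pair minimizing $d(p,j^* )$, and add $p$ to $A(j^*,r^* )$ and to $A(j',r')$ for every ancestor $\langle j',r'\rangle$ of $\langle j^*,r^*\rangle$ in $\mathcal{T}$.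 *)

From HB Require Import structures.
From mathcomp Require Import all_boot all_order all_algebra.
From mathcomp Require Import all_classical all_reals all_analysis.
Set Implicit Arguments. Unset Strict Implicit. Unset Printing Implicit Defensive.
Import Order.TTheory GRing.Theory Num.Theory.
Local Open Scope classical_set_scope.
Local Open Scope ring_scope.

Section Defs.
Context {R : realType} {V : Type}.
Implicit Types (d : V -> V -> R) (F : set V) (f : V -> R) (J : int -> set V).

Definition is_metric d :=
  [/\ (forall x y, 0 <= d x y), (forall x y, d x y = 0 <-> x = y),
      (forall x y, d x y = d y x) & (forall x y z, d x z <= d x y + d y z)].

Definition is_diameter d (W : R) :=
  (forall x y, d x y <= W) /\ (forall w, (forall x y, d x y <= w) -> W <= w).

Definition mball d (x : V) (rho : R) : set V := [set y | d x y <= rho].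

Definition is_min_cost F f (fmin : R) :=
  (exists2 j, F j & f j = fmin) /\ (forall j, F j -> fmin <= f j).

Definition log5 (x : R) : R := ln x / ln 5.
Definition rho_min (fmin : R) : int := Num.floor (log5 fmin).
Definition rho_max (W : R) : int := Num.ceil (log5 W).

Definition Jprime F f (r : int) : set V := [set j | F j /\ f j <= (5 : R) ^ r].

Definition separated d (r : int) (S : set V) :=
  forall a b, S a -> S b -> a <> b -> (5 : R) ^ (r + 1) < d a b.

Definition maximal_sep d F f (r : int) (S : set V) :=
  [/\ S `<=` Jprime F f r, separated d r S &
      forall S', S `<=` S' -> S' `<=` Jprime F f r -> separated d r S' -> S' = S].

Definition inPi (rmin rmax : int) J (j : V) (r : int) :=
  (rmin <= r <= rmax)%R /\ J r j.

(* parent(j,r) = <parent j r, r+1>, with parent j r a closest facility of J_{r+1} *)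
Definition is_parent d (rmin rmax : int) J (parent : V -> int -> V) :=
  forall j r, inPi rmin rmax J j r -> (r < rmax)%R ->
    J (r + 1) (parent j r) /\
    (forall j', J (r + 1) j' -> d j (parent j r) <= d j j').

Fixpoint anc (parent : V -> int -> V) (k : nat) (j : V) (r : int) : V * int :=
  match k with
  | 0 => (j, r)
  | k'.+1 => let: (j', r') := anc parent k' j r in (parent j' r', r' + 1)
  end.

Definition covered d rmin rmax J (p : V) :=
  exists j r, inPi rmin rmax J j r /\ mball d j (7 * (5 : R) ^ r) p.

Definition is_rstar d rmin rmax J (rstar : V -> int) :=
  forall p, covered d rmin rmax J p ->
    (exists j, inPi rmin rmax J j (rstar p) /\ mball d j (7 * (5 : R) ^ (rstar p)) p) /\
    (forall j r, inPi rmin rmax J j r -> mball d j (7 * (5 : R) ^ r) p -> (rstar p <= r)%R).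

Definition is_jstar d rmin rmax J (rstar : V -> int) (jstar : V -> V) :=
  forall p, covered d rmin rmax J p ->
    [/\ inPi rmin rmax J (jstar p) (rstar p),
        mball d (jstar p) (7 * (5 : R) ^ (rstar p)) p &
        forall j, inPi rmin rmax J j (rstar p) -> mball d j (7 * (5 : R) ^ (rstar p)) p ->
          d p (jstar p) <= d p j].

(* A(j,r): p is added to A(jstar,rstar) and to all its ancestors in the tree *)
Definition area d rmin rmax J parent rstar jstar (j : V) (r : int) : set V :=
  [set p | covered d rmin rmax J p /\
           exists k : nat, anc parent k (jstar p) (rstar p) = (j, r)].

End Defs.

From Pilot Require Import Defs.
From HB Require Import structures.
From mathcomp Require Import all_boot all_order all_algebra.
From mathcomp Require Import all_classical all_reals all_analysis.
From mathcomp Require Import lra zify.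
Import Order.TTheory GRing.Theory Num.Theory.
Local Open Scope classical_set_scope.
Local Open Scope ring_scope.

(* A point p is put in A(j,r) only when <j,r> is an ancestor of the pair
   <jstar p, rstar p>, whose ball of radius 7*5^(rstar p) contains p.  By
   maximality of J_(r+1), every facility of J_r is within 5^(r+2) of J_(r+1),
   hence of its parent; so d(p,j) <= 7*5^r gives
   d(p, parent j) <= 7*5^r + 25*5^r <= 7*5^(r+1), and the invariant
   "p lies in the ball of radius 7*5^r around the node" survives every step up
   the tree. *)

Lemma anc_succ {V : Type} (parent : V -> int -> V) (k : nat) (j : V) (r : int) :
  anc parent k.+1 j r =
  (parent (anc parent k j r).1 (anc parent k j r).2, (anc parent k j r).2 + 1).
Proof. by rewrite /=; case: anc. Qed.

Lemma anc_level {V : Type} (parent : V -> int -> V) (k : nat) (j : V) (r : int) :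
  (anc parent k j r).2 = r + k%:Z.
Proof.
elim: k => [|k IH]; first by rewrite addr0.
by rewrite anc_succ /= IH -addrA -PoszD addn1.
Qed.

Section Areas.
Context {R : realType} {V : Type} {d : V -> V -> R}.
Hypothesis d_metric : is_metric d.

Lemma expz5S (r : int) : (5 : R) ^ (r + 1) = (5 : R) ^ r * 5.
Proof. by rewrite exprzDr ?expr1z // unitfE pnatr_eq0. Qed.

Lemma Jprime_succ {F : set V} {f : V -> R} {r : int} :
  Jprime F f r `<=` Jprime F f (r + 1).
Proof.
move=> j [Fj fj]; split=> //; apply: le_trans fj _.
by rewrite expz5S ler_peMr ?ltW ?exprz_gt0 ?ltr1n.
Qed.

Lemma maximal_sep_near {F : set V} {f : V -> R} {r : int} {S : set V} {x : V} :
  maximal_sep d F f r S -> Jprime F f r x ->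
  exists2 s, S s & d x s <= (5 : R) ^ (r + 1).
Proof.
case: d_metric => _ d0 dC _ [subS sepS maxS] Jx.
apply: contrapT => near_none.
have far s : S s -> (5 : R) ^ (r + 1) < d x s.
  by move=> Ss; rewrite ltNge; apply/negP => ?; apply: near_none; exists s.
have sepSx : Defs.separated d r (S `|` [set x]).
  move=> a b [Sa|->] [Sb|->] ab //; first exact: sepS.
    by rewrite dC; apply: far.
  exact: far.
have Sx : S x.
  rewrite -(maxS (S `|` [set x])) //; first by right.
  by move=> y [/subS|->].
by move: (far x Sx); rewrite ((d0 x x).2 erefl) ltNge ltW ?exprz_gt0.
Qed.

Lemma mball_step {j j' p : V} {r : int} :
  mball d j (7 * (5 : R) ^ r) p -> d j j' <= (5 : R) ^ (r + 1 + 1) ->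
  mball d j' (7 * (5 : R) ^ (r + 1)) p.
Proof.
case: d_metric => _ _ dC dT; rewrite /mball /= => djp djj'.
apply: le_trans (dT _ j _) _; rewrite dC.
move: djp djj'; rewrite !expz5S.
have : (0 : R) < 5 ^ r by apply: exprz_gt0.
lra.
Qed.

Context {F : set V} {f : V -> R} {rmin rmax : int}.
Context {J : int -> set V} {parent : V -> int -> V}.
Hypothesis J_maximal :
  forall r : int, rmin <= r <= rmax -> maximal_sep d F f r (J r).
Hypothesis parentP : is_parent d rmin rmax J parent.

Lemma inPi_parent {j : V} {r : int} :
  inPi rmin rmax J j r -> r < rmax -> inPi rmin rmax J (parent j r) (r + 1).
Proof.
move=> Pjr lt; have [/andP[lo _] _] := Pjr.
split; last by case: (parentP _ _ Pjr lt).
by apply/andP; split; lia.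
Qed.

Lemma dist_parent {j : V} {r : int} :
  inPi rmin rmax J j r -> r < rmax ->
  d j (parent j r) <= (5 : R) ^ (r + 1 + 1).
Proof.
move=> Pjr lt; have [/andP[lo _] Jj] := Pjr.
have [sub0 _ _] := J_maximal _ (proj1 Pjr).
have maxJ1 : maximal_sep d F f (r + 1) (J (r + 1)).
  by apply: J_maximal; apply/andP; split; lia.
have [s Js djs] := maximal_sep_near maxJ1 (Jprime_succ _ (sub0 _ Jj)).
have [_ closest] := parentP _ _ Pjr lt.
exact: le_trans (closest _ Js) djs.
Qed.

Lemma anc_mball (k : nat) {j p : V} {r : int} :
  inPi rmin rmax J j r -> mball d j (7 * (5 : R) ^ r) p -> r + k%:Z <= rmax ->
  let a := anc parent k j r in
  inPi rmin rmax J a.1 a.2 /\ mball d a.1 (7 * (5 : R) ^ a.2) p.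
Proof.
move=> Pjr Bjp; elim: k => [//|k IH] le_rmax.
rewrite anc_succ /=; set a := anc parent k j r.
have lt : a.2 < rmax by rewrite /a anc_level; lia.
have [Pa Ba] : inPi rmin rmax J a.1 a.2 /\ mball d a.1 (7 * (5 : R) ^ a.2) p.
  by apply: IH; lia.
split; first exact: inPi_parent.
exact: mball_step Ba (dist_parent Pa lt).
Qed.

End Areas.

Theorem lemma5 (R : realType) (V : Type) (d : V -> V -> R) (W : R)
  (F : set V) (f : V -> R) (fmin : R) (J : int -> set V)
  (parent : V -> int -> V) (rstar : V -> int) (jstar : V -> V) :
  is_metric d -> is_diameter d W ->
  finite_set F -> (forall j, F j -> 0 < f j) -> is_min_cost F f fmin ->
  (forall r : int, (rho_min fmin <= r <= rho_max W)%R -> maximal_sep d F f r (J r)) ->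
  is_parent d (rho_min fmin) (rho_max W) J parent ->
  is_rstar d (rho_min fmin) (rho_max W) J rstar ->
  is_jstar d (rho_min fmin) (rho_max W) J rstar jstar ->
  forall (j : V) (r : int), inPi (rho_min fmin) (rho_max W) J j r ->
    area d (rho_min fmin) (rho_max W) J parent rstar jstar j r
      `<=` mball d j (7 * (5 : R) ^ r).
Proof.
move=> dm _ _ _ _ J_maximal parentP _ jstarP j r [/andP[_ r_le] _] p [cov [k anc_k]].
have [Pstar Bstar _] := jstarP p cov.
have := anc_mball dm J_maximal parentP k Pstar Bstar.
rewrite -(anc_level parent k (jstar p)) anc_k /=.
by case/(_ r_le).
Qed.
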